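(* There exists a planar graph that is not $\{1,3\}$-choosable. More specifically, there is a planar graph $G$ and an assignment $L$ with $L(v)\in\{\{1,2,3,4\},\{1,2,4,5\},\{1,3,4,5\},\{2,3,4,5\}\}$ for every vertex $v$ (so $L$ is a $\{1,3\}$-assignment with colour groups $\{4\}$ and $\{1,2,3,5\}$) such that $G$ has no proper colouring $f$ with $f(v)\in L(v)$ for all $v$.
   Context: For a partition $\lambda=\{k_1,\dots,k_q\}$ of $k$ (multiset of positive integers summing to $k$), a $\lambda$-assignment of a graph $G$ is an assignment $L$ of colour sets with $|L(v)|=k$ for all $v$ such that $\bigcup_{v}L(v)$ can be partitioned into sets $C_1,\dots,C_q$ (colour groups) with $|L(v)\cap C_i|=k_i$ for every vertex $v$ and every $i$; $G$ is $\lambda$-choosable if for every $\lambda$-assignment $L$ there is a proper colouring $f$ with $f(v)\in L(v)$ for all $v$. *)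

From Stdlib Require Import Reals List.
Import ListNotations.
Open Scope R_scope.

(* A finite simple graph on vertex set {0, ..., nv-1}, with edge list. *)
Record graph := Graph { nv : nat ; edges : list (nat * nat) }.

Definition well_formed (G : graph) : Prop :=
  forall u v, In (u, v) (edges G) -> (u < nv G)%nat /\ (v < nv G)%nat /\ u <> v.

Definition adj (G : graph) (u v : nat) : Prop :=
  In (u, v) (edges G) \/ In (v, u) (edges G).

Definition pt := (R * R)%type.

Definition planar_embedding (G : graph) (pos : nat -> pt)
    (gamma : nat -> R -> pt) : Prop :=
  (forall u v, (u < nv G)%nat -> (v < nv G)%nat -> pos u = pos v -> u = v) /\
  (forall i, (i < length (edges G))%nat ->
     let e := nth i (edges G) (0%nat, 0%nat) in
     continuity (fun t => fst (gamma i t)) /\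
     continuity (fun t => snd (gamma i t)) /\
     gamma i 0 = pos (fst e) /\ gamma i 1 = pos (snd e) /\
     (forall s t, 0 <= s <= 1 -> 0 <= t <= 1 -> gamma i s = gamma i t -> s = t) /\
     (forall t w, 0 < t < 1 -> (w < nv G)%nat -> gamma i t <> pos w)) /\
  (forall i j, (i < length (edges G))%nat -> (j < length (edges G))%nat -> i <> j ->
     forall s t, 0 < s < 1 -> 0 <= t <= 1 -> gamma i s <> gamma j t).

Definition planar (G : graph) : Prop :=
  exists pos gamma, planar_embedding G pos gamma.

Definition L_colouring (G : graph) (L : nat -> list nat) (f : nat -> nat) : Prop :=
  (forall v, (v < nv G)%nat -> In (f v) (L v)) /\
  (forall u v, adj G u v -> f u <> f v).

Definition admissible_list (l : list nat) : Prop :=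
  l = [1;2;3;4]%nat \/ l = [1;2;4;5]%nat \/ l = [1;3;4;5]%nat \/ l = [2;3;4;5]%nat.

From Stdlib Require Import Reals List Lia Lra Psatz ZArith Bool.
Import ListNotations.

(* The graph is the paper's 108-vertex construction.  Non-colourability is
   certified by an exhaustive search tree: at each node one uncoloured vertex
   is tried with every colour of its list not already used on a neighbour,
   and every such branch must again be refuted.  Planarity is certified by a
   straight-line drawing with integer coordinates, in which each edge avoids
   all vertices but its ends and any two edges meet at most in a shared end;
   these finitely many incidence facts reduce to signs of integer
   determinants and dot products, decided by computation. *)

Local Open Scope nat_scope.

Inductive refutation := Branch (v : nat) (bs : branches)
with branches :=
  | BNil
  | BCons (c : nat) (t : refutation) (bs : branches).

Scheme refutation_ind2 := Induction for refutation Sort Prop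
  with branches_ind2 := Induction for branches Sort Prop.

Definition neighbours (G : graph) (v : nat) : list nat :=
  flat_map (fun e => if fst e =? v then [snd e] else if snd e =? v then [fst e] else [])
    (edges G).

Lemma in_neighbours_adj G v w : In w (neighbours G v) -> adj G v w.
Proof.
  unfold neighbours, adj. induction (edges G) as [|[a b] es IH]; cbn; [tauto|].
  intros [Hw|Hw]%in_app_or; [|destruct (IH Hw); tauto].
  destruct (Nat.eqb_spec a v) as [->|_]; cbn in Hw.
  - destruct Hw as [->|[]]; tauto.
  - destruct (Nat.eqb_spec b v) as [->|_]; cbn in Hw; [|tauto].
    destruct Hw as [->|[]]; tauto.
Qed.

Fixpoint lookup (p : list (nat * nat)) (v : nat) : option nat :=
  match p with
  | [] => None
  | (w, c) :: p' => if w =? v then Some c else lookup p' v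
  end.

Definition colour_free (G : graph) (p : list (nat * nat)) (v c : nat) : bool :=
  forallb (fun w => match lookup p w with Some c' => negb (c' =? c) | None => true end)
    (neighbours G v).

Definition extends (f : nat -> nat) (p : list (nat * nat)) : Prop :=
  forall v c, lookup p v = Some c -> f v = c.

Lemma extends_cons f p v : extends f p -> extends f ((v, f v) :: p).
Proof.
  intros Hp w c. cbn. destruct (Nat.eqb_spec v w) as [->|_]; [congruence|apply Hp].
Qed.

Section Refutations.

Variables (G : graph) (L : nat -> list nat).

Fixpoint refutes (t : refutation) (p : list (nat * nat)) : bool :=
  match t with
  | Branch v bs =>
      (v <? nv G) &&
      forallb (fun c => negb (colour_free G p v c) || branch_refutes bs v c p) (L v)
  end
with branch_refutes (bs : branches) (v c : nat) (p : list (nat * nat)) : bool :=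
  match bs with
  | BNil => false
  | BCons c' t bs' => if c' =? c then refutes t ((v, c) :: p) else branch_refutes bs' v c p
  end.

Lemma colour_free_colouring f p v :
  L_colouring G L f -> extends f p -> colour_free G p v (f v) = true.
Proof.
  intros [_ Hproper] Hp. apply forallb_forall. intros w Hw.
  destruct (lookup p w) as [c|] eqn:Hc; [|reflexivity].
  apply Hp in Hc. apply negb_true_iff, Nat.eqb_neq. intros Heq.
  apply (Hproper v w (in_neighbours_adj G v w Hw)). congruence.
Qed.

Lemma refutes_sound f : L_colouring G L f ->
  forall t p, extends f p -> refutes t p = true -> False.
Proof.
  intros Hf.
  apply (refutation_ind2 (fun t => forall p, extends f p -> refutes t p = true -> False)
           (fun bs => forall v p, extends f p -> branch_refutes bs v (f v) p = true -> False)).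
  - intros v bs IH p Hp [Hv Hall]%andb_prop. apply Nat.ltb_lt in Hv.
    pose proof (proj1 (forallb_forall _ _) Hall (f v) (proj1 Hf v Hv)) as Hfv.
    cbv beta in Hfv. rewrite (colour_free_colouring f p v Hf Hp) in Hfv. exact (IH v p Hp Hfv).
  - discriminate.
  - intros c t IHt bs IHbs v p Hp. cbn.
    destruct (Nat.eqb_spec c (f v)) as [->|_].
    + exact (IHt _ (extends_cons f p v Hp)).
    + exact (IHbs v p Hp).
Qed.

Lemma not_colourable_of_refutes t :
  refutes t [] = true -> ~ exists f, L_colouring G L f.
Proof.
  intros Ht [f Hf]. apply (refutes_sound f Hf t []); [intros v c; discriminate|exact Ht].
Qed.

End Refutations.

Local Open Scope R_scope.

Definition seg (A B : pt) (t : R) : pt :=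
  (fst A + t * (fst B - fst A), snd A + t * (snd B - snd A)).

(* [cross A B X] is twice the signed area of [A B X]; [dot A B X] is [|AB|^2]
   times the parameter of the projection of [X] onto the line [AB]. *)
Definition cross (A B X : pt) : R :=
  (fst B - fst A) * (snd X - snd A) - (snd B - snd A) * (fst X - fst A).
Definition dot (A B X : pt) : R :=
  (fst X - fst A) * (fst B - fst A) + (snd X - snd A) * (snd B - snd A).

Lemma seg0 A B : seg A B 0 = A.
Proof. destruct A, B; unfold seg; cbn; f_equal; ring. Qed.
Lemma seg1 A B : seg A B 1 = B.
Proof. destruct A, B; unfold seg; cbn; f_equal; ring. Qed.

Lemma continuity_seg_fst A B : continuity (fun t => fst (seg A B t)).
Proof. unfold seg; cbn. reg. Qed.
Lemma continuity_seg_snd A B : continuity (fun t => snd (seg A B t)).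
Proof. unfold seg; cbn. reg. Qed.

Lemma cross_seg A B C D t : cross A B (seg C D t) = (1 - t) * cross A B C + t * cross A B D.
Proof. destruct A, B, C, D; unfold cross, seg; cbn; ring. Qed.
Lemma dot_seg A B C D t : dot A B (seg C D t) = (1 - t) * dot A B C + t * dot A B D.
Proof. destruct A, B, C, D; unfold dot, seg; cbn; ring. Qed.
Lemma cross_seg_self A B s : cross A B (seg A B s) = 0.
Proof. destruct A, B; unfold cross, seg; cbn; ring. Qed.
Lemma dot_seg_self A B s : dot A B (seg A B s) = s * dot A B B.
Proof. destruct A, B; unfold dot, seg; cbn; ring. Qed.
Lemma cross_start A B : cross A B A = 0.
Proof. destruct A, B; unfold cross; cbn; ring. Qed.
Lemma cross_end A B : cross A B B = 0.
Proof. destruct A, B; unfold cross; cbn; ring. Qed.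
Lemma dot_start A B : dot A B A = 0.
Proof. destruct A, B; unfold dot; cbn; ring. Qed.

Lemma seg_inj A B s t : 0 < dot A B B -> seg A B s = seg A B t -> s = t.
Proof.
  intros HAB H. apply (f_equal (dot A B)) in H. rewrite !dot_seg_self in H. nra.
Qed.

Lemma convex_comb_neq0 a b t : 0 < a * b -> 0 <= t <= 1 -> (1 - t) * a + t * b <> 0.
Proof.
  intros Hab Ht H.
  assert (Ha2 : 0 <= (1 - t) * (a * a)) by (apply Rmult_le_pos; nra).
  assert (E : (1 - t) * (a * a) + t * (a * b) = 0).
  { transitivity (((1 - t) * a + t * b) * a); [ring|rewrite H; ring]. }
  assert (Htab : t * (a * b) = 0) by (assert (0 <= t * (a * b)) by (apply Rmult_le_pos; lra); lra).
  apply Rmult_integral in Htab as [->|]; [|lra].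
  assert (a = 0) as -> by lra. lra.
Qed.

Lemma open_seg_neq A B W s : 0 < dot A B B -> 0 < s < 1 ->
  W = A \/ W = B \/ cross A B W <> 0 \/ dot A B W < 0 \/ dot A B B < dot A B W ->
  seg A B s <> W.
Proof.
  intros HAB Hs HW <-. rewrite cross_seg_self, dot_seg_self in HW.
  destruct HW as [H|[H|[H|[H|H]]]]; [| |lra|nra|nra].
  - apply (f_equal (dot A B)) in H. rewrite dot_seg_self, dot_start in H. nra.
  - apply (f_equal (dot A B)) in H. rewrite dot_seg_self in H. nra.
Qed.

Lemma open_seg_disjoint A B C D s t : 0 < dot A B B -> 0 < s < 1 -> 0 <= t <= 1 ->
  (dot A B C <= 0 /\ dot A B D <= 0) \/
  (dot A B B <= dot A B C /\ dot A B B <= dot A B D) \/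
  0 < cross A B C * cross A B D \/ 0 < cross C D A * cross C D B \/
  ((C = A \/ C = B) /\ cross A B D <> 0) \/ ((D = A \/ D = B) /\ cross A B C <> 0) ->
  seg A B s <> seg C D t.
Proof.
  intros HAB Hs Ht Hcases Heq.
  assert (Hcross : (1 - t) * cross A B C + t * cross A B D = 0).
  { rewrite <- cross_seg, <- Heq. apply cross_seg_self. }
  assert (Hdot : (1 - t) * dot A B C + t * dot A B D = s * dot A B B).
  { rewrite <- dot_seg, <- Heq. apply dot_seg_self. }
  destruct Hcases as [[HC HD]|[[HC HD]|[H|[H|[[HC HD]|[HD HC]]]]]].
  - nra.
  - nra.
  - exact (convex_comb_neq0 _ _ t H Ht Hcross).
  - apply (convex_comb_neq0 _ _ s H (conj (Rlt_le _ _ (proj1 Hs)) (Rlt_le _ _ (proj2 Hs)))).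
    rewrite <- cross_seg, Heq. apply cross_seg_self.
  - assert (t = 0) as ->.
    { assert (Hc : cross A B C = 0)
        by (destruct HC as [->| ->]; [apply cross_start|apply cross_end]).
      rewrite Hc in Hcross. destruct (Rmult_integral t (cross A B D)); lra. }
    rewrite seg0 in Heq. revert Heq. apply open_seg_neq; [exact HAB|exact Hs|tauto].
  - assert (t = 1) as ->.
    { assert (Hd : cross A B D = 0)
        by (destruct HD as [->| ->]; [apply cross_start|apply cross_end]).
      rewrite Hd in Hcross. destruct (Rmult_integral (1 - t) (cross A B C)); lra. }
    rewrite seg1 in Heq. revert Heq. apply open_seg_neq; [exact HAB|exact Hs|tauto].
Qed.

Definition zpt (P : Z * Z) : pt := (IZR (fst P), IZR (snd P)).

Definition crossZ (A B X : Z * Z) : Z :=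
  ((fst B - fst A) * (snd X - snd A) - (snd B - snd A) * (fst X - fst A))%Z.
Definition dotZ (A B X : Z * Z) : Z :=
  ((fst X - fst A) * (fst B - fst A) + (snd X - snd A) * (snd B - snd A))%Z.

Lemma cross_zpt A B X : cross (zpt A) (zpt B) (zpt X) = IZR (crossZ A B X).
Proof. unfold cross, crossZ, zpt; cbn. rewrite minus_IZR, !mult_IZR, !minus_IZR. reflexivity. Qed.
Lemma dot_zpt A B X : dot (zpt A) (zpt B) (zpt X) = IZR (dotZ A B X).
Proof. unfold dot, dotZ, zpt; cbn. rewrite plus_IZR, !mult_IZR, !minus_IZR. reflexivity. Qed.

Definition zpt_eqb (P Q : Z * Z) : bool := (fst P =? fst Q)%Z && (snd P =? snd Q)%Z.

Lemma zpt_eqb_eq P Q : zpt_eqb P Q = true <-> P = Q.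
Proof.
  destruct P, Q; unfold zpt_eqb; cbn. rewrite andb_true_iff, !Z.eqb_eq.
  split; [intros [-> ->]|intros [=]]; auto.
Qed.

Lemma zpt_inj P Q : zpt P = zpt Q -> P = Q.
Proof. destruct P, Q; unfold zpt; cbn. intros [= ?%eq_IZR ?%eq_IZR]. congruence. Qed.

Lemma IZR_neq0 z : (z =? 0)%Z = false -> IZR z <> 0.
Proof. intros Hz Hz0. apply eq_IZR in Hz0. subst. discriminate. Qed.

Definition avoidsb (A B W : Z * Z) : bool :=
  if negb (crossZ A B W =? 0)%Z then true else
  zpt_eqb W A || zpt_eqb W B || (dotZ A B W <? 0)%Z || (dotZ A B B <? dotZ A B W)%Z.

Lemma avoidsb_sound A B W s : (0 < dotZ A B B)%Z -> avoidsb A B W = true -> 0 < s < 1 ->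
  seg (zpt A) (zpt B) s <> zpt W.
Proof.
  intros HAB HW Hs. apply open_seg_neq; [rewrite dot_zpt; apply IZR_lt, HAB|exact Hs|].
  rewrite !dot_zpt, cross_zpt. unfold avoidsb in HW.
  destruct (negb (crossZ A B W =? 0)%Z) eqn:Hcross.
  { right; right; left. apply IZR_neq0, negb_true_iff, Hcross. }
  rewrite !orb_true_iff in HW. destruct HW as [[[H|H]|H]|H].
  - left. f_equal. apply zpt_eqb_eq, H.
  - right; left. f_equal. apply zpt_eqb_eq, H.
  - right; right; right; left. apply IZR_lt, Z.ltb_lt, H.
  - right; right; right; right. apply IZR_lt, Z.ltb_lt, H.
Qed.

Definition below (a b c d : Z) : bool :=
  (a <? c)%Z && (a <? d)%Z && (b <? c)%Z && (b <? d)%Z.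

Lemma below_sound a b c d s t : below a b c d = true -> 0 <= s <= 1 -> 0 <= t <= 1 ->
  IZR a + s * (IZR b - IZR a) < IZR c + t * (IZR d - IZR c).
Proof.
  unfold below. rewrite !andb_true_iff, !Z.ltb_lt. intros [[[Hac Had] Hbc] Hbd] Hs Ht.
  apply IZR_lt in Hac, Had, Hbc, Hbd.
  assert (IZR a + s * (IZR b - IZR a) <= Rmax (IZR a) (IZR b)).
  { unfold Rmax; destruct (Rle_dec (IZR a) (IZR b)); nra. }
  assert (Rmin (IZR c) (IZR d) <= IZR c + t * (IZR d - IZR c)).
  { unfold Rmin; destruct (Rle_dec (IZR c) (IZR d)); nra. }
  assert (Rmax (IZR a) (IZR b) < Rmin (IZR c) (IZR d)).
  { unfold Rmax, Rmin; destruct (Rle_dec (IZR a) (IZR b)), (Rle_dec (IZR c) (IZR d)); lra. }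
  lra.
Qed.

Definition boxes_apartb (A B C D : Z * Z) : bool :=
  below (fst A) (fst B) (fst C) (fst D) || below (fst C) (fst D) (fst A) (fst B) ||
  below (snd A) (snd B) (snd C) (snd D) || below (snd C) (snd D) (snd A) (snd B).

Lemma boxes_apartb_sound A B C D s t : boxes_apartb A B C D = true ->
  0 <= s <= 1 -> 0 <= t <= 1 -> seg (zpt A) (zpt B) s <> seg (zpt C) (zpt D) t.
Proof.
  unfold boxes_apartb, seg, zpt; cbn. rewrite !orb_true_iff.
  intros H Hs Ht [= Hx Hy].
  destruct H as [[[H|H]|H]|H]; [pose proof (below_sound _ _ _ _ s t H Hs Ht)
    |pose proof (below_sound _ _ _ _ t s H Ht Hs)
    |pose proof (below_sound _ _ _ _ s t H Hs Ht)
    |pose proof (below_sound _ _ _ _ t s H Ht Hs)]; lra.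
Qed.

(* The bounding-box test comes first and guards the exact test by [if], so
   that evaluation skips the expensive products for most pairs of edges. *)
Definition crossing_freeb (A B C D : Z * Z) : bool :=
  if boxes_apartb A B C D then true else
  ((dotZ A B C <=? 0)%Z && (dotZ A B D <=? 0)%Z) ||
  ((dotZ A B B <=? dotZ A B C)%Z && (dotZ A B B <=? dotZ A B D)%Z) ||
  (0 <? crossZ A B C * crossZ A B D)%Z || (0 <? crossZ C D A * crossZ C D B)%Z ||
  ((zpt_eqb C A || zpt_eqb C B) && negb (crossZ A B D =? 0)%Z) ||
  ((zpt_eqb D A || zpt_eqb D B) && negb (crossZ A B C =? 0)%Z).

Lemma crossing_freeb_sound A B C D s t : (0 < dotZ A B B)%Z -> crossing_freeb A B C D = true ->
  0 < s < 1 -> 0 <= t <= 1 -> seg (zpt A) (zpt B) s <> seg (zpt C) (zpt D) t.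
Proof.
  intros HAB H Hs Ht. unfold crossing_freeb in H.
  destruct (boxes_apartb A B C D) eqn:Hbox; [apply boxes_apartb_sound; auto; lra|].
  apply open_seg_disjoint; [rewrite dot_zpt; apply IZR_lt, HAB|exact Hs|exact Ht|].
  rewrite !dot_zpt, !cross_zpt, <- !mult_IZR.
  repeat rewrite ?orb_true_iff, ?andb_true_iff in H.
  rewrite !Z.leb_le, !Z.ltb_lt, !zpt_eqb_eq, !negb_true_iff in H.
  destruct H as [[[[[[H1 H2]|[H1 H2]]|H]|H]|[HC HD]]|[HD HC]].
  - left. split; apply IZR_le; assumption.
  - right; left. split; apply IZR_le; assumption.
  - do 2 right; left. apply IZR_lt, H.
  - do 3 right; left. apply IZR_lt, H.
  - do 4 right; left. split; [destruct HC as [->| ->]; auto|apply IZR_neq0, HD].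
  - do 5 right. split; [destruct HD as [->| ->]; auto|apply IZR_neq0, HC].
Qed.

Lemma forallb_seq (f : nat -> bool) n i : forallb f (seq 0 n) = true -> (i < n)%nat -> f i = true.
Proof. intros Hf Hi. apply (proj1 (forallb_forall f _) Hf), in_seq. lia. Qed.

Section StraightLineDrawing.

Variables (G : graph) (P : nat -> Z * Z).

Definition edge_ends (i : nat) : (Z * Z) * (Z * Z) :=
  let e := nth i (edges G) (0%nat, 0%nat) in (P (fst e), P (snd e)).

Definition drawn_edge (i : nat) : R -> pt :=
  seg (zpt (fst (edge_ends i))) (zpt (snd (edge_ends i))).

Definition vertices_distinctb : bool :=
  forallb (fun u => forallb (fun v => (u =? v)%nat || negb (zpt_eqb (P u) (P v)))
                      (seq 0 (nv G)))
    (seq 0 (nv G)).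

Definition edge_clearb (i : nat) : bool :=
  let A := fst (edge_ends i) in let B := snd (edge_ends i) in
  (0 <? dotZ A B B)%Z && forallb (fun w => avoidsb A B (P w)) (seq 0 (nv G)).

Definition edges_crossing_freeb : bool :=
  let m := length (edges G) in
  forallb (fun i =>
    let A := fst (edge_ends i) in let B := snd (edge_ends i) in
    forallb (fun j => (i =? j)%nat || crossing_freeb A B (fst (edge_ends j)) (snd (edge_ends j)))
      (seq 0 m))
    (seq 0 m).

Definition straight_line_embeddingb : bool :=
  vertices_distinctb && forallb edge_clearb (seq 0 (length (edges G))) &&
  edges_crossing_freeb.

Lemma straight_line_embedding : straight_line_embeddingb = true ->
  planar_embedding G (fun v => zpt (P v)) drawn_edge.
Proof.
  unfold straight_line_embeddingb. intros [[Hdistinct Hclear]%andb_prop Hfree]%andb_prop.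
  split; [|split].
  - intros u v Hu Hv Huv.
    pose proof (forallb_seq _ _ v (forallb_seq _ _ u Hdistinct Hu) Hv) as Hb; cbv beta in Hb.
    apply zpt_inj in Huv. rewrite Huv, (proj2 (zpt_eqb_eq _ _) eq_refl), orb_false_r in Hb.
    apply Nat.eqb_eq, Hb.
  - intros i Hi. pose proof (forallb_seq _ _ i Hclear Hi) as Hb.
    unfold edge_clearb in Hb. apply andb_prop in Hb as [HAB Hav]. apply Z.ltb_lt in HAB.
    split; [apply continuity_seg_fst|]. split; [apply continuity_seg_snd|].
    split; [apply seg0|]. split; [apply seg1|]. split.
    + intros s t _ _. apply seg_inj. rewrite dot_zpt. apply IZR_lt, HAB.
    + intros t w Ht Hw. apply avoidsb_sound; [exact HAB|apply (forallb_seq _ _ w Hav Hw)|exact Ht].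
  - intros i j Hi Hj Hij s t Hs Ht.
    pose proof (forallb_seq _ _ j (forallb_seq _ _ i Hfree Hi) Hj) as Hb; cbv beta in Hb.
    apply Nat.eqb_neq in Hij. rewrite Hij in Hb.
    pose proof (forallb_seq _ _ i Hclear Hi) as HAB. apply andb_prop in HAB as [HAB _].
    apply crossing_freeb_sound; [apply Z.ltb_lt, HAB|exact Hb|exact Hs|exact Ht].
Qed.

End StraightLineDrawing.

Definition well_formedb (G : graph) : bool :=
  forallb (fun e => (fst e <? nv G)%nat && (snd e <? nv G)%nat && negb (fst e =? snd e)%nat)
    (edges G).

Lemma well_formedb_sound G : well_formedb G = true -> well_formed G.
Proof.
  intros HG u v Huv. apply (proj1 (forallb_forall _ _) HG) in Huv.
  cbv beta in Huv; cbn [fst snd] in Huv.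
  rewrite !andb_true_iff, !Nat.ltb_lt, negb_true_iff, Nat.eqb_neq in Huv. tauto.
Qed.

(* The admissible lists are [1;2;3;4;5] with one of the colours 1, 2, 3, 5
   removed; every value other than 1, 2, 3 is read as 5. *)
Definition list_missing (c : nat) : list nat :=
  match c with
  | 1 => [2;3;4;5]
  | 2 => [1;3;4;5]
  | 3 => [1;2;4;5]
  | _ => [1;2;3;4]
  end%nat.

Lemma list_missing_admissible c : admissible_list (list_missing c).
Proof. unfold admissible_list. destruct c as [|[|[|[|]]]]; cbn; tauto. Qed.

Definition edges8 : list (nat * nat) := [
  (0,1); (0,2); (0,3); (0,4); (0,5); (0,6); (0,7); (0,9); (0,10); (0,32);
  (0,34); (0,50); (0,51); (0,52); (0,54); (0,55); (0,57); (0,58); (0,59);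
  (0,60); (0,62); (0,63); (0,67); (0,68); (0,70); (0,72); (0,73); (0,78);
  (0,79); (0,81); (0,82); (0,84); (0,85); (1,2); (1,3); (1,4); (1,5); (1,6);
  (1,7); (1,8); (1,10); (1,11); (1,13); (1,14); (1,19); (1,21); (1,22);
  (1,24); (1,25); (1,26); (1,28); (1,30); (1,31); (1,35); (1,36); (1,38);
  (1,39); (1,43); (1,44); (1,46); (1,90); (1,91); (1,92); (1,94); (1,95);
  (1,97); (1,98); (1,99); (1,101); (1,103); (1,104); (2,3); (2,4); (2,35);
  (2,36); (2,37); (2,39); (2,41); (2,42); (2,50); (2,51); (2,53); (2,54);
  (2,59); (2,60); (2,61); (2,63); (2,65); (2,66); (2,74); (2,90); (2,91);
  (2,93); (2,94); (2,105); (2,107); (3,5); (3,29); (3,31); (3,33); (3,34);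
  (3,35); (3,40); (3,42); (3,43); (3,45); (3,46); (3,47); (3,49); (3,50);
  (3,55); (3,56); (3,58); (4,59); (4,74); (4,76); (4,77); (4,78); (4,80);
  (4,81); (4,86); (4,87); (4,89); (4,90); (4,102); (4,104); (4,106); (4,107);
  (5,6); (5,22); (5,23); (5,25); (5,29); (5,30); (5,32); (5,33); (6,7);
  (6,11); (6,12); (6,14); (6,15); (6,22); (6,27); (6,28); (7,8); (7,9);
  (7,11); (7,15); (7,17); (7,18); (7,20); (7,21); (8,9); (8,10); (9,10);
  (11,12); (11,13); (11,15); (11,16); (11,18); (11,19); (11,20); (12,13);
  (12,14); (13,14); (15,16); (15,17); (16,17); (16,18); (17,18); (19,20);
  (19,21); (20,21); (22,23); (22,24); (22,26); (22,27); (23,24); (23,25);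
  (24,25); (26,27); (26,28); (27,28); (29,30); (29,31); (30,31); (32,33);
  (32,34); (33,34); (35,36); (35,40); (35,41); (35,43); (35,48); (35,49);
  (36,37); (36,38); (37,38); (37,39); (38,39); (40,41); (40,42); (41,42);
  (43,44); (43,45); (43,47); (43,48); (44,45); (44,46); (45,46); (47,48);
  (47,49); (48,49); (50,51); (50,55); (51,52); (51,53); (52,53); (52,54);
  (53,54); (55,56); (55,57); (56,57); (56,58); (57,58); (59,60); (59,64);
  (59,66); (59,67); (59,69); (59,70); (59,74); (59,75); (59,77); (59,78);
  (59,82); (59,83); (59,85); (59,86); (59,88); (59,89); (60,61); (60,62);
  (60,64); (60,65); (60,67); (60,71); (60,73); (61,62); (61,63); (62,63);
  (64,65); (64,66); (65,66); (67,68); (67,69); (67,71); (67,72); (68,69);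
  (68,70); (69,70); (71,72); (71,73); (72,73); (74,75); (74,76); (75,76);
  (75,77); (76,77); (78,79); (78,80); (78,82); (78,86); (79,80); (79,81);
  (80,81); (82,83); (82,84); (83,84); (83,85); (84,85); (86,87); (86,88);
  (87,88); (87,89); (88,89); (90,91); (90,95); (90,96); (90,98); (90,102);
  (90,103); (90,105); (90,106); (91,92); (91,93); (91,95); (91,100);
  (91,101); (92,93); (92,94); (93,94); (95,96); (95,97); (95,99); (95,100);
  (96,97); (96,98); (97,98); (99,100); (99,101); (100,101); (102,103);
  (102,104); (103,104); (105,106); (105,107); (106,107)]%nat.

Definition missing_colour8 : list nat := [
  5; 5; 3; 2; 3; 5; 5; 5; 1; 3; 2; 5; 3; 2; 1; 5; 1; 2; 3; 2; 1; 3; 5; 2; 1;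
  3; 2; 1; 3; 3; 1; 2; 1; 3; 2; 2; 3; 1; 5; 2; 2; 5; 1; 2; 5; 3; 1; 3; 5; 1;
  2; 5; 1; 3; 2; 5; 1; 3; 2; 3; 3; 2; 1; 5; 2; 1; 5; 5; 1; 2; 3; 2; 1; 3; 5;
  1; 2; 3; 3; 1; 3; 2; 5; 2; 1; 3; 3; 5; 1; 2; 3; 3; 1; 2; 5; 5; 2; 1; 3; 1;
  2; 3; 2; 5; 1; 5; 2; 1]%nat.

Definition coords8 : list (Z * Z) := [
  (0,0); (264913032384000,0); (132456516192000,44152172064000);
  (150117385017600,14717390688000); (132456516192000,264913032384000);
  (129302789616000,5256210960000); (152106658704000,1212971760000);
  (107935825536000,373222080000); (172932450768000,139958280000);
  (69665633452800,149288832000); (100297213632000,41469120000);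
  (152539257024000,610727040000); (164881032624000,743616720000);
  (208690094844000,355550580000); (193166485344000,717141600000);
  (134553684988800,716473296000); (138459235939200,622117584000);
  (128366884356480,602923305600); (137359670374080,550050177600);
  (204265801555200,281613024000); (140245547904000,410921280000);
  (182659409856000,233735040000); (174607284852000,1920538620000);
  (156455162463600,3729888162000); (199675367892000,1650989340000);
  (215199384800400,1768917150000); (213609840444000,983242260000);
  (177141048084000,1471289820000); (210759908158800,677242566000);
  (155352571133760,10407297700800); (198842460616800,3416537124000);
  (193954184424000,7884316440000); (74147615942400,3971359392000);
  (123547238614800,9329774454000); (73324142892000,6570263700000);
  (177870178886400,18922359456000); (202198926758400,18021294720000);
  (172553896944000,29584958832000); (222322705862400,12915261216000);
  (204496641835200,19898512920000); (161567838432000,18922359456000);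
  (149556722515200,32471703264000); (143389434988800,31537265760000);
  (203436388995840,9951759417600); (224835007837440,6058269817600);
  (192494125824000,10434552128000); (214180084198080,6762991435200);
  (174220265995776,13231635056640); (188340551118720,14086645372800);
  (169628440101120,15838715692800); (87200539826400,20236412196000);
  (73219018672800,21462861420000); (50301938887200,15505822332000);
  (86280702908400,27288495234000); (47058856724880,15391937761200);
  (96858827465400,12417798393000); (105846948207000,11629366749000);
  (59728077208800,7154287140000); (99756313757100,10072214252100);
  (75689437824000,88304344128000); (65671718112000,44152172064000);
  (80636459904000,39246375168000); (49392923580000,27595107540000);
  (80883811008000,29434781376000); (75411167832000,62548910424000);
  (100316332116000,49671193572000); (108747912873600,57397823683200);
  (60191939808000,57737455776000); (37664913686400,37699162300800);
  (61633235664000,65662204608000); (40327743456000,45661648032000);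
  (54722864196000,45425792412000); (36663141715200,33283945094400);
  (28578566016000,21132663552000); (120292142256000,132456516192000);
  (108127768320000,132456516192000); (122657437188000,195005426616000);
  (103059279180000,165570645240000); (75689437824000,122267553408000);
  (58659314313600,99851835283200); (86201859744000,156230762688000);
  (52562109600000,101889627840000); (55046863872000,79659163584000);
  (59425591680000,76347048960000); (29587689331200,40694099846400);
  (42431957568000,50790435696000); (88304344128000,135098099136000);
  (104703722323200,182344696934400); (87603516000000,128724756160000);
  (107800108416000,188890333632000); (182127709764000,96582876390000);
  (206326496376000,51369354036000); (234091419962400,19826023417200);
  (184790734128000,44074982952000); (214251245208000,20425096692000);
  (210238330302000,56509321869000); (198839428187400,74902522394700);
  (223829678872800,43563880760400); (222312912822000,49038518529000);
  (242651968158600,22089731964300); (213075030168000,48568491972000);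
  (236108743620750,26327172997125); (175504883954400,137423635549200);
  (219381104943000,62318951194500); (188336608960500,144529375740750);
  (153744170580000,98159739678000); (157292112978000,153152846847000);
  (138665415388500,133491332724750)]%Z.

Definition refutation8 : refutation :=
  (Branch 0 (BCons 1 (Branch 1 (BCons 2 (Branch 2 (BCons 4 (Branch 4 (BCons 5
  (Branch 90 (BCons 1 (Branch 102 (BCons 3 (Branch 103 (BCons 4 (Branch 104
  BNil) BNil)) (BCons 4 (Branch 103 (BCons 3 (Branch 104 BNil) BNil)) BNil)))
  BNil)) BNil)) (BCons 5 (Branch 4 (BCons 4 (Branch 90 (BCons 1 (Branch 91
  (BCons 4 (Branch 95 (BCons 3 (Branch 96 (BCons 4 (Branch 97 (BCons 5
  (Branch 98 BNil) BNil)) (BCons 5 (Branch 97 (BCons 4 (Branch 98 BNil)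
  BNil)) BNil))) BNil)) BNil)) BNil)) BNil)) BNil))) (BCons 3 (Branch 3
  (BCons 4 (Branch 5 (BCons 2 (Branch 6 (BCons 4 (Branch 7 (BCons 2 (Branch 8
  (BCons 4 (Branch 9 (BCons 5 (Branch 10 BNil) BNil)) (BCons 5 (Branch 9
  (BCons 4 (Branch 10 BNil) BNil)) BNil))) BNil)) BNil)) BNil)) (BCons 5
  (Branch 5 (BCons 2 (Branch 6 (BCons 4 (Branch 7 (BCons 2 (Branch 8 (BCons 4
  (Branch 9 (BCons 5 (Branch 10 BNil) BNil)) (BCons 5 (Branch 9 (BCons 4
  (Branch 10 BNil) BNil)) BNil))) BNil)) BNil)) (BCons 4 (Branch 6 (BCons 2
  (Branch 7 (BCons 4 (Branch 11 (BCons 1 (Branch 12 (BCons 4 (Branch 13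
  (BCons 5 (Branch 14 BNil) BNil)) (BCons 5 (Branch 13 (BCons 4 (Branch 14
  BNil) BNil)) BNil))) BNil)) BNil)) BNil)) BNil))) BNil))) (BCons 4 (Branch
  2 (BCons 2 (Branch 4 (BCons 5 (Branch 90 (BCons 1 (Branch 105 (BCons 3
  (Branch 106 (BCons 4 (Branch 107 BNil) BNil)) (BCons 4 (Branch 106 (BCons 3
  (Branch 107 BNil) BNil)) BNil))) BNil)) BNil)) (BCons 5 (Branch 3 (BCons 3
  (Branch 50 (BCons 4 (Branch 55 (BCons 2 (Branch 56 (BCons 4 (Branch 57
  (BCons 5 (Branch 58 BNil) BNil)) (BCons 5 (Branch 57 (BCons 4 (Branch 58
  BNil) BNil)) BNil))) BNil)) BNil)) BNil)) BNil))) BNil)))) (BCons 2 (Branch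
  1 (BCons 1 (Branch 2 (BCons 4 (Branch 4 (BCons 5 (Branch 59 (BCons 1
  (Branch 78 (BCons 4 (Branch 82 (BCons 3 (Branch 83 (BCons 4 (Branch 84
  (BCons 5 (Branch 85 BNil) BNil)) (BCons 5 (Branch 84 (BCons 4 (Branch 85
  BNil) BNil)) BNil))) BNil)) BNil)) BNil)) BNil)) (BCons 5 (Branch 4 (BCons
  4 (Branch 59 (BCons 1 (Branch 60 (BCons 4 (Branch 67 (BCons 3 (Branch 68
  (BCons 4 (Branch 69 (BCons 5 (Branch 70 BNil) BNil)) (BCons 5 (Branch 69
  (BCons 4 (Branch 70 BNil) BNil)) BNil))) BNil)) BNil)) BNil)) BNil))
  BNil))) (BCons 3 (Branch 5 (BCons 1 (Branch 6 (BCons 4 (Branch 7 (BCons 1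
  (Branch 11 (BCons 2 (Branch 15 (BCons 3 (Branch 16 (BCons 4 (Branch 17
  (BCons 5 (Branch 18 BNil) BNil)) (BCons 5 (Branch 17 (BCons 4 (Branch 18
  BNil) BNil)) BNil))) BNil)) BNil)) BNil)) BNil)) (BCons 4 (Branch 3 (BCons
  1 (Branch 2 (BCons 4 (Branch 4 (BCons 1 (Branch 59 (BCons 5 (Branch 78
  (BCons 4 (Branch 86 (BCons 2 (Branch 87 (BCons 3 (Branch 88 (BCons 4
  (Branch 89 BNil) BNil)) (BCons 4 (Branch 88 (BCons 3 (Branch 89 BNil)
  BNil)) BNil))) BNil)) BNil)) BNil)) (BCons 5 (Branch 59 (BCons 1 (Branch 78
  (BCons 4 (Branch 82 (BCons 3 (Branch 83 (BCons 4 (Branch 84 (BCons 5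
  (Branch 85 BNil) BNil)) (BCons 5 (Branch 84 (BCons 4 (Branch 85 BNil)
  BNil)) BNil))) BNil)) BNil)) BNil)) BNil))) (BCons 5 (Branch 4 (BCons 1
  (Branch 59 (BCons 4 (Branch 60 (BCons 1 (Branch 67 (BCons 3 (Branch 71
  (BCons 4 (Branch 72 (BCons 5 (Branch 73 BNil) BNil)) (BCons 5 (Branch 72
  (BCons 4 (Branch 73 BNil) BNil)) BNil))) BNil)) BNil)) BNil)) (BCons 4
  (Branch 59 (BCons 1 (Branch 60 (BCons 4 (Branch 67 (BCons 3 (Branch 68
  (BCons 4 (Branch 69 (BCons 5 (Branch 70 BNil) BNil)) (BCons 5 (Branch 69
  (BCons 4 (Branch 70 BNil) BNil)) BNil))) BNil)) BNil)) BNil)) BNil)))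
  BNil))) (BCons 5 (Branch 2 (BCons 1 (Branch 35 (BCons 4 (Branch 43 (BCons 1
  (Branch 44 (BCons 2 (Branch 45 (BCons 4 (Branch 46 BNil) BNil)) (BCons 4
  (Branch 45 (BCons 2 (Branch 46 BNil) BNil)) BNil))) BNil)) BNil)) (BCons 4
  (Branch 4 (BCons 1 (Branch 59 (BCons 5 (Branch 78 (BCons 4 (Branch 86
  (BCons 2 (Branch 87 (BCons 3 (Branch 88 (BCons 4 (Branch 89 BNil) BNil))
  (BCons 4 (Branch 88 (BCons 3 (Branch 89 BNil) BNil)) BNil))) BNil)) BNil))
  BNil)) (BCons 5 (Branch 59 (BCons 1 (Branch 78 (BCons 4 (Branch 82 (BCons 3
  (Branch 83 (BCons 4 (Branch 84 (BCons 5 (Branch 85 BNil) BNil)) (BCons 5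
  (Branch 84 (BCons 4 (Branch 85 BNil) BNil)) BNil))) BNil)) BNil)) BNil))
  BNil))) BNil))) BNil))) BNil))) (BCons 4 (Branch 2 (BCons 1 (Branch 4
  (BCons 5 (Branch 59 (BCons 4 (Branch 60 (BCons 5 (Branch 61 (BCons 3
  (Branch 62 (BCons 4 (Branch 63 BNil) BNil)) (BCons 4 (Branch 62 (BCons 3
  (Branch 63 BNil) BNil)) BNil))) BNil)) BNil)) BNil)) (BCons 5 (Branch 4
  (BCons 1 (Branch 59 (BCons 4 (Branch 60 (BCons 1 (Branch 67 (BCons 3
  (Branch 71 (BCons 4 (Branch 72 (BCons 5 (Branch 73 BNil) BNil)) (BCons 5
  (Branch 72 (BCons 4 (Branch 73 BNil) BNil)) BNil))) BNil)) BNil)) BNil))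
  BNil)) BNil))) BNil)))) (BCons 3 (Branch 1 (BCons 1 (Branch 3 (BCons 4
  (Branch 5 (BCons 2 (Branch 6 (BCons 4 (Branch 7 (BCons 2 (Branch 11 (BCons
  3 (Branch 19 (BCons 4 (Branch 20 (BCons 5 (Branch 21 BNil) BNil)) (BCons 5
  (Branch 20 (BCons 4 (Branch 21 BNil) BNil)) BNil))) BNil)) BNil)) BNil))
  BNil)) (BCons 5 (Branch 5 (BCons 2 (Branch 6 (BCons 4 (Branch 7 (BCons 2
  (Branch 11 (BCons 3 (Branch 19 (BCons 4 (Branch 20 (BCons 5 (Branch 21
  BNil) BNil)) (BCons 5 (Branch 20 (BCons 4 (Branch 21 BNil) BNil)) BNil)))
  BNil)) BNil)) BNil)) (BCons 4 (Branch 6 (BCons 2 (Branch 22 (BCons 3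
  (Branch 26 (BCons 4 (Branch 27 (BCons 5 (Branch 28 BNil) BNil)) (BCons 5
  (Branch 27 (BCons 4 (Branch 28 BNil) BNil)) BNil))) BNil)) BNil)) BNil)))
  BNil))) (BCons 2 (Branch 5 (BCons 1 (Branch 6 (BCons 4 (Branch 22 (BCons 3
  (Branch 23 (BCons 4 (Branch 24 (BCons 5 (Branch 25 BNil) BNil)) (BCons 5
  (Branch 24 (BCons 4 (Branch 25 BNil) BNil)) BNil))) BNil)) BNil)) (BCons 4
  (Branch 3 (BCons 1 (Branch 2 (BCons 4 (Branch 4 (BCons 1 (Branch 59 (BCons
  2 (Branch 74 (BCons 3 (Branch 75 (BCons 4 (Branch 76 (BCons 5 (Branch 77
  BNil) BNil)) (BCons 5 (Branch 76 (BCons 4 (Branch 77 BNil) BNil)) BNil)))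
  BNil)) (BCons 5 (Branch 78 (BCons 2 (Branch 79 (BCons 4 (Branch 80 (BCons 5
  (Branch 81 BNil) BNil)) (BCons 5 (Branch 80 (BCons 4 (Branch 81 BNil)
  BNil)) BNil))) (BCons 4 (Branch 86 (BCons 2 (Branch 87 (BCons 3 (Branch 88
  (BCons 4 (Branch 89 BNil) BNil)) (BCons 4 (Branch 88 (BCons 3 (Branch 89
  BNil) BNil)) BNil))) BNil)) BNil))) BNil))) (BCons 5 (Branch 90 (BCons 1
  (Branch 102 (BCons 3 (Branch 103 (BCons 4 (Branch 104 BNil) BNil)) (BCons 4
  (Branch 103 (BCons 3 (Branch 104 BNil) BNil)) BNil))) BNil)) BNil))) (BCons
  5 (Branch 4 (BCons 1 (Branch 90 (BCons 4 (Branch 91 (BCons 1 (Branch 95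
  (BCons 3 (Branch 99 (BCons 4 (Branch 100 (BCons 5 (Branch 101 BNil) BNil))
  (BCons 5 (Branch 100 (BCons 4 (Branch 101 BNil) BNil)) BNil))) BNil))
  BNil)) BNil)) (BCons 4 (Branch 90 (BCons 1 (Branch 91 (BCons 4 (Branch 95
  (BCons 3 (Branch 96 (BCons 4 (Branch 97 (BCons 5 (Branch 98 BNil) BNil))
  (BCons 5 (Branch 97 (BCons 4 (Branch 98 BNil) BNil)) BNil))) BNil)) BNil))
  BNil)) BNil))) BNil))) (BCons 5 (Branch 2 (BCons 1 (Branch 50 (BCons 4
  (Branch 51 (BCons 2 (Branch 52 (BCons 4 (Branch 53 (BCons 5 (Branch 54
  BNil) BNil)) (BCons 5 (Branch 53 (BCons 4 (Branch 54 BNil) BNil)) BNil)))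
  BNil)) BNil)) (BCons 4 (Branch 4 (BCons 1 (Branch 59 (BCons 2 (Branch 74
  (BCons 3 (Branch 75 (BCons 4 (Branch 76 (BCons 5 (Branch 77 BNil) BNil))
  (BCons 5 (Branch 76 (BCons 4 (Branch 77 BNil) BNil)) BNil))) BNil)) (BCons
  5 (Branch 78 (BCons 2 (Branch 79 (BCons 4 (Branch 80 (BCons 5 (Branch 81
  BNil) BNil)) (BCons 5 (Branch 80 (BCons 4 (Branch 81 BNil) BNil)) BNil)))
  (BCons 4 (Branch 86 (BCons 2 (Branch 87 (BCons 3 (Branch 88 (BCons 4
  (Branch 89 BNil) BNil)) (BCons 4 (Branch 88 (BCons 3 (Branch 89 BNil)
  BNil)) BNil))) BNil)) BNil))) BNil))) (BCons 5 (Branch 90 (BCons 1 (Branch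
  102 (BCons 3 (Branch 103 (BCons 4 (Branch 104 BNil) BNil)) (BCons 4 (Branch
  103 (BCons 3 (Branch 104 BNil) BNil)) BNil))) BNil)) BNil))) BNil)))
  BNil))) BNil))) (BCons 4 (Branch 3 (BCons 1 (Branch 5 (BCons 2 (Branch 32
  (BCons 4 (Branch 33 (BCons 5 (Branch 34 BNil) BNil)) (BCons 5 (Branch 33
  (BCons 4 (Branch 34 BNil) BNil)) BNil))) BNil)) (BCons 5 (Branch 2 (BCons 1
  (Branch 50 (BCons 4 (Branch 51 (BCons 2 (Branch 52 (BCons 4 (Branch 53
  (BCons 5 (Branch 54 BNil) BNil)) (BCons 5 (Branch 53 (BCons 4 (Branch 54
  BNil) BNil)) BNil))) BNil)) BNil)) (BCons 2 (Branch 35 (BCons 1 (Branch 40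
  (BCons 3 (Branch 41 (BCons 4 (Branch 42 BNil) BNil)) (BCons 4 (Branch 41
  (BCons 3 (Branch 42 BNil) BNil)) BNil))) (BCons 3 (Branch 43 (BCons 1
  (Branch 47 (BCons 2 (Branch 48 (BCons 4 (Branch 49 BNil) BNil)) (BCons 4
  (Branch 48 (BCons 2 (Branch 49 BNil) BNil)) BNil))) BNil)) BNil))) BNil)))
  BNil))) BNil)))) (BCons 4 (Branch 1 (BCons 1 (Branch 2 (BCons 2 (Branch 4
  (BCons 5 (Branch 59 (BCons 1 (Branch 60 (BCons 5 (Branch 64 (BCons 3
  (Branch 65 (BCons 4 (Branch 66 BNil) BNil)) (BCons 4 (Branch 65 (BCons 3
  (Branch 66 BNil) BNil)) BNil))) BNil)) BNil)) BNil)) (BCons 5 (Branch 3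
  (BCons 3 (Branch 35 (BCons 4 (Branch 36 (BCons 2 (Branch 37 (BCons 3
  (Branch 38 (BCons 4 (Branch 39 BNil) BNil)) (BCons 4 (Branch 38 (BCons 3
  (Branch 39 BNil) BNil)) BNil))) BNil)) BNil)) BNil)) BNil))) (BCons 2
  (Branch 2 (BCons 1 (Branch 4 (BCons 5 (Branch 90 (BCons 4 (Branch 91 (BCons
  5 (Branch 92 (BCons 3 (Branch 93 (BCons 4 (Branch 94 BNil) BNil)) (BCons 4
  (Branch 93 (BCons 3 (Branch 94 BNil) BNil)) BNil))) BNil)) BNil)) BNil))
  (BCons 5 (Branch 4 (BCons 1 (Branch 90 (BCons 4 (Branch 91 (BCons 1 (Branch
  95 (BCons 3 (Branch 99 (BCons 4 (Branch 100 (BCons 5 (Branch 101 BNil)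
  BNil)) (BCons 5 (Branch 100 (BCons 4 (Branch 101 BNil) BNil)) BNil)))
  BNil)) BNil)) BNil)) BNil)) BNil))) (BCons 3 (Branch 3 (BCons 1 (Branch 5
  (BCons 2 (Branch 29 (BCons 4 (Branch 30 (BCons 5 (Branch 31 BNil) BNil))
  (BCons 5 (Branch 30 (BCons 4 (Branch 31 BNil) BNil)) BNil))) BNil)) (BCons
  5 (Branch 2 (BCons 1 (Branch 35 (BCons 4 (Branch 43 (BCons 1 (Branch 44
  (BCons 2 (Branch 45 (BCons 4 (Branch 46 BNil) BNil)) (BCons 4 (Branch 45
  (BCons 2 (Branch 46 BNil) BNil)) BNil))) BNil)) BNil)) (BCons 2 (Branch 35
  (BCons 1 (Branch 40 (BCons 3 (Branch 41 (BCons 4 (Branch 42 BNil) BNil))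
  (BCons 4 (Branch 41 (BCons 3 (Branch 42 BNil) BNil)) BNil))) (BCons 4
  (Branch 43 (BCons 1 (Branch 44 (BCons 2 (Branch 45 (BCons 4 (Branch 46
  BNil) BNil)) (BCons 4 (Branch 45 (BCons 2 (Branch 46 BNil) BNil)) BNil)))
  BNil)) BNil))) BNil))) BNil))) BNil)))) BNil))))).

Definition G8 : graph := Graph 108 edges8.
Definition L8 (v : nat) : list nat := list_missing (nth v missing_colour8 5%nat).
Definition position8 (v : nat) : Z * Z := nth v coords8 (0, 0)%Z.

Lemma G8_well_formed : well_formed G8.
Proof. apply well_formedb_sound. vm_compute. reflexivity. Qed.

Lemma G8_planar : planar G8.
Proof.
  exists (fun v => zpt (position8 v)), (drawn_edge G8 position8).
  apply straight_line_embedding. vm_compute. reflexivity.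
Qed.

Lemma G8_not_L8_colourable : ~ exists f, L_colouring G8 L8 f.
Proof. apply (not_colourable_of_refutes G8 L8 refutation8). vm_compute. reflexivity. Qed.

Theorem mainTheorem8 :
  exists (G : graph) (L : nat -> list nat),
    well_formed G /\ planar G /\
    (forall v, (v < nv G)%nat -> admissible_list (L v)) /\
    ~ (exists f : nat -> nat, L_colouring G L f).
Proof.
  exists G8, L8. split; [exact G8_well_formed|]. split; [exact G8_planar|].
  split; [intros v _; apply list_missing_admissible|exact G8_not_L8_colourable].
Qed.
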